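(* Assume $\mathbb{E}[f(x)]\ge c$ and fix a type vector $\kappa$. Let ${\bf g}$ be a network that is stable under complete information (i.e., when all agents know $\kappa$, no selected pair would form a new link or sever an existing link of ${\bf g}$) and that belongs to one of the following classes: (1) the empty network; (2) a minimally connected (tree) network, including a star; (3) the complete network; (4) a core-periphery network; (5) a wheel network. Then ${\bf g}\in G^*_{IC}(\kappa)$.
   Context: Model. There are $N\ge 2$ agents $I=\{1,\dots,N\}$. Each agent $i$ has a private type $k_i\in X$; types are drawn i.i.d. from a prior distribution $H$ on $X$, and $\kappa=(k_1,\dots,k_N)$ is the type vector. There is a function $f:X\to\mathbb{R}_{>0}$, a link cost $c>0$ and a decay factor $\delta\in(0,1)$; $\mathbb{E}[f(x)]=\int_X f\,dH$ is assumed well defined. A network ${\bf g}$ is a set of unordered pairs $ij$ ($i\neq j$), called links. Agents $i,j$ are connected in ${\bf g}$ if there is a path of links between them; $d_{ij}$ is the length of a shortest such path ($\infty$ if not connected); $C_i$ denotes the component of ${\bf g}$ containing $i$. Agent $i$'s payoff is $u_i({\bf g})=\sum_{j\neq i,\ j\text{ connected to }i}\delta^{d_{ij}-1}f(k_j)-c\cdot\#\{j: ij\in{\bf g}\}$. Dynamics. The network is empty at $t=0$. In each period $t\ge1$ one unordered pair $(i,j)$ is selected; the sequence of selected pairs up to $t$ is the selection path $\gamma(t)$. The selected agents observe each other's components and simultaneously choose $a_{ij},a_{ji}\in\{0,1\}$ (1 = agree to form the link if absent / keep it if present, 0 = refuse / sever); after the period the link $ij$ is present iff $a_{ij}=a_{ji}=1$.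 Agents are myopic and play the stable optimistic equilibrium (SOE): agent $i$ chooses $1$ iff his expected current payoff (w.r.t. his belief) from the network resulting with the link $ij$ is at least his current payoff without it. Information. Under complete information every agent knows $\kappa$. Under incomplete information (simple updating rule), if $i$ and $j$ have ever been connected at some period so far, each knows the other's type; otherwise each one's belief about the other's type is the prior $H$. Emergence and stability. Given a selection path $\gamma(t)$, the resulting network ${\bf g}(\gamma(t))$ and beliefs $B(\gamma(t))$ are uniquely determined. A pair $({\bf g},B)$ is stable if no link is formed or severed along any subsequent selection path. $G^*_{IC}(\kappa)$ is the set of networks ${\bf g}$ such that, under incomplete information, ${\bf g}={\bf g}(\gamma(t))$ for some selection path $\gamma(t)$ and $({\bf g}(\gamma(t)),B(\gamma(t)))$ is stable. Network classes. ${\bf g}$ is complete if $ij\in{\bf g}$ for all $i\neq j$. A star: there is $i$ with $ij\in{\bf g}$ for all $j\neq i$ and no other links. Core-periphery: there is a nonempty $I'\subsetneq I$ such that all pairs in $I'$ are linked and every $j'\in I\setminus I'$ is linked to exactly one agent of $I'$ and to no other agent. Tree (minimally connected): connected, and removing any link disconnects it. Wheel: there is a bijection $\pi:I\to I$ such that ${\bf g}$ consists exactly of the links $\pi^{-1}(1)\pi^{-1}(2),\pi^{-1}(2)\pi^{-1}(3),\dots,\pi^{-1}(N-1)\pi^{-1}(N),\pi^{-1}(N)\pi^{-1}(1)$. *)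

From HB Require Import structures.
From mathcomp Require Import all_boot all_order all_algebra all_fingroup.
Set Implicit Arguments. Unset Strict Implicit. Unset Printing Implicit Defensive.
Import Order.TTheory GRing.Theory Num.Theory.
Local Open Scope ring_scope.

(* Agents are 'I_N.  A network is a set of links; a link ij is the
   two-element set [set i; j]. *)
Definition network (N : nat) := {set {set 'I_N}}.

Definition wf_network N (g : network N) : bool := [forall e in g, #|e| == 2%N].

Definition adj N (g : network N) : rel 'I_N :=
  fun i j => (i != j) && ([set i; j] \in g).

Definition has_walk N (g : network N) (i j : 'I_N) (n : nat) : bool :=
  [exists p : n.-tuple 'I_N, path (adj g) i p && (last i p == j)].

(* d_ij : length of a shortest path (only used when i,j are connected;
   then it is < N). *)
Definition dist N (g : network N) (i j : 'I_N) : nat :=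
  find (fun n => has_walk g i j n) (iota 0 N).

(* Beliefs: K is the set of ordered pairs (i,j) such that i knows j's type
   (under the simple updating rule: i and j have been connected at some
   period).  Otherwise i's belief about k_j is the prior H, and by linearity
   of the expected payoff only Ef = E[f(x)] matters. *)
Definition knowledge N := {set 'I_N * 'I_N}.

Section Model.
Variables (R : realFieldType) (X : Type) (N : nat).
Variables (f : X -> R) (kappa : 'I_N -> X) (Ef c delta : R).

Definition belief_val (K : knowledge N) (i j : 'I_N) : R :=
  if (i, j) \in K then f (kappa j) else Ef.

Definition exp_payoff (K : knowledge N) (g : network N) (i : 'I_N) : R :=
  \sum_(j | (j != i) && connect (adj g) i j)
     delta ^+ (dist g i j).-1 * belief_val K i j
  - c *+ #|[set j | adj g i j]|.

Definition update_know (g : network N) (K : knowledge N) : knowledge N :=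
  K :|: [set p | connect (adj g) p.1 p.2].

Definition step (st : network N * knowledge N) (p : 'I_N * 'I_N)
    : network N * knowledge N :=
  let g := st.1 in let K := st.2 in
  let gw := g :|: [set [set p.1; p.2]] in
  let go := g :\ [set p.1; p.2] in
  let agree a := exp_payoff K go a <= exp_payoff K gw a in
  let g' := if agree p.1 && agree p.2 then gw else go in
  (g', update_know g' K).

Definition run (st : network N * knowledge N) (s : seq ('I_N * 'I_N)) :=
  foldl step st s.

Definition valid_path (s : seq ('I_N * 'I_N)) : bool :=
  all (fun p => p.1 != p.2) s.

(* (g,B) stable: along no subsequent selection path is a link formed or
   severed (prefixes of selection paths are selection paths). *)
Definition stable (st : network N * knowledge N) : Prop :=
  forall s, valid_path s -> (run st s).1 = st.1.

(* complete information: every agent knows every type (K = all pairs,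
   which is preserved by updating) *)
Definition stable_CI (g : network N) : Prop := stable (g, setT).

Definition in_GIC (g : network N) : Prop :=
  exists s, valid_path s /\ (run (set0, set0) s).1 = g /\ stable (run (set0, set0) s).

End Model.

Definition is_empty_net N (g : network N) : Prop := g = set0.

Definition is_complete N (g : network N) : Prop :=
  forall i j : 'I_N, i != j -> adj g i j.

Definition is_star N (g : network N) : Prop :=
  exists i : 'I_N, forall j k, adj g j k = (j != k) && ((j == i) || (k == i)).

Definition net_connected N (g : network N) : Prop :=
  forall i j : 'I_N, connect (adj g) i j.

Definition is_tree N (g : network N) : Prop :=
  net_connected g /\ forall e, e \in g -> ~ net_connected (g :\ e).

Definition is_core_periphery N (g : network N) : Prop :=
  exists I' : {set 'I_N}, [/\ I' != set0, I' != setT,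
    (forall i j, i \in I' -> j \in I' -> i != j -> adj g i j) &
    (forall j', j' \notin I' ->
        #|[set k in I' | adj g j' k]| = 1%N /\
        (forall k, k \notin I' -> ~~ adj g j' k))].

(* sigma = pi^{-1}: the wheel links sigma(k) sigma(k+1 mod N) *)
Definition is_wheel N (g : network N) : Prop :=
  exists sigma : {perm 'I_N},
    g = [set [set sigma k; sigma (ordS k)] | k : 'I_N].

From Pilot Require Import Defs.
From HB Require Import structures.
From mathcomp Require Import all_boot all_order all_algebra all_fingroup.
From mathcomp Require Import lra.
Set Implicit Arguments. Unset Strict Implicit. Unset Printing Implicit Defensive.
Import Order.TTheory GRing.Theory Num.Theory.
Local Open Scope ring_scope.

(* A network of one of the listed classes is grown in two phases.
   First the links of a spanning tree of [g] are selected one at a time; each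
   joins two components, so its endpoints are strangers who expect at least
   E[f] - c >= 0 from it, and both agree.  Once the tree spans all agents,
   everybody has been connected to everybody, so beliefs coincide with
   complete information.  The remaining links of [g] (none for a tree, the
   closing link of a wheel, the core links outside a star of the core) are then
   added under complete information: stability of [g] says that each endpoint
   values the link in [g], and the link is worth at least as much in the
   current subnetwork, because it shortens no route in [g] that it does not
   shorten as much there.  The empty network is handled by selecting every
   pair twice in a row: the link is formed between strangers and then severed
   under complete information, which teaches both of them the other's type. *)

Section Network.
Variable N : nat.
Implicit Types (g h : network N) (i j a b x y : 'I_N).

Lemma eq_set2 a b x y : [set a; b] = [set x; y] -> a != b ->
  (a = x /\ b = y) \/ (a = y /\ b = x).
Proof.
move=> E nab; have /set2P [] : a \in [set x; y] by rewrite -E set21.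
- move=> ax; have /set2P [] : b \in [set x; y] by rewrite -E set22.
  + by move=> bx; rewrite ax bx eqxx in nab.
  + by left.
- move=> ay; have /set2P [] : b \in [set x; y] by rewrite -E set22.
  + by right.
  + by move=> bY; rewrite ay bY eqxx in nab.
Qed.

Lemma adj_sym g : symmetric (adj g).
Proof. by move=> i j; rewrite /adj eq_sym setUC. Qed.

Lemma connect_adj_sym g : connect_sym (adj g).
Proof. exact/sym_connect_sym/adj_sym. Qed.

Lemma adjS g1 g2 i j : g1 \subset g2 -> adj g1 i j -> adj g2 i j.
Proof. by move=> /subsetP S /andP[nij /S]; rewrite /adj nij. Qed.

Lemma connect_adjS g1 g2 i j : g1 \subset g2 ->
  connect (adj g1) i j -> connect (adj g2) i j.
Proof. by move=> S; apply: connect_sub => u v /(adjS S)/connect1. Qed.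

Lemma adj_setD1 g e i j : adj g i j -> [set i; j] != e -> adj (g :\ e) i j.
Proof. by case/andP=> nij ijg ne; rewrite /adj nij !inE ne. Qed.

Lemma adj_setD1_notin g (e : {set 'I_N}) i j : adj g i j -> i \notin e -> adj (g :\ e) i j.
Proof. by move=> a ie; apply: adj_setD1 => //; apply: contraNneq ie => <-; apply: set21. Qed.

Lemma adj_setU1 g i j : i != j -> adj (g :|: [set [set i; j]]) i j.
Proof. by move=> nij; rewrite /adj nij !inE eqxx orbT. Qed.

Lemma connect_isolated g a b : (forall e, e \in g -> a \notin e) ->
  connect (adj g) a b -> a = b.
Proof.
move=> iso /connectP[[|x p] //= /andP[/andP[_ ag] _] _].
by move: (iso _ ag); rewrite set21.
Qed.

Lemma connect_set1 (e : {set 'I_N}) x y : connect (adj [set e]) x y ->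
  x = y \/ x \in e /\ y \in e.
Proof.
case: (boolP (x \in e)) => xe C; last first.
  by left; apply: connect_isolated C => e' /set1P ->.
have cl : closed (adj [set e]) (mem e).
  apply: intro_closed; first exact: connect_adj_sym.
  by move=> u v /andP[_ /set1P <-]; rewrite set22.
by right; rewrite -(closed_connect cl C).
Qed.

Lemma connected_setD1 g x y : net_connected g -> [set x; y] \in g ->
  connect (adj (g :\ [set x; y])) x y -> net_connected (g :\ [set x; y]).
Proof.
move=> C xyg cxy u v; apply: connect_sub (C u v) => a b ab.
case: (eqVneq [set a; b] [set x; y]) => [E | ne]; last exact/connect1/adj_setD1.
case/andP: ab => nab _.
by case: (eq_set2 E nab) => -[-> ->] //; rewrite connect_adj_sym.
Qed.

Lemma has_walkS g1 g2 i j n : g1 \subset g2 -> has_walk g1 i j n -> has_walk g2 i j n.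
Proof.
move=> S /existsP[p /andP[pp l]]; apply/existsP; exists p; rewrite l andbT.
by apply: sub_path pp => u v; apply: adjS.
Qed.

Lemma distS g1 g2 i j : g1 \subset g2 -> (dist g2 i j <= dist g1 i j)%N.
Proof. by move=> S; apply: sub_find => n; apply: has_walkS. Qed.

Lemma dist_le g i j n : (n < N)%N -> has_walk g i j n -> (dist g i j <= n)%N.
Proof.
move=> nN hw; rewrite /dist leqNgt; apply/negP => lt.
by have := before_find 0%N lt; rewrite nth_iota // add0n hw.
Qed.

Lemma dist_ge g i j m : (m <= N)%N -> (forall n, (n < m)%N -> ~~ has_walk g i j n) ->
  (m <= dist g i j)%N.
Proof.
move=> mN nw; rewrite leqNgt; apply/negP => lt.
have hs : has (has_walk g i j) (iota 0 N) by rewrite has_find size_iota (leq_trans lt).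
have fN : (dist g i j < N)%N by move: hs; rewrite has_find size_iota.
by move: (nth_find 0%N hs); rewrite nth_iota // add0n; apply/negP/nw.
Qed.

Lemma has_walk0 g i j : has_walk g i j 0 = (i == j).
Proof.
apply/existsP/eqP => [[[[|//] _] /andP[_ /eqP //]] | ->].
by exists [tuple]; rewrite /= eqxx.
Qed.

Lemma has_walk1 g i j : has_walk g i j 1 = adj g i j.
Proof.
apply/existsP/idP => [[[[|x [|//]] //= _]] | a]; last by exists [tuple j]; rewrite /= a eqxx.
by rewrite andbT => /andP[a /eqP <-].
Qed.

Lemma ord_neq_gt1 i j : i != j -> (1 < N)%N.
Proof.
move=> nij; have := subset_leq_card (subsetT [set i; j]).
by rewrite cards2 nij cardsT card_ord.
Qed.

Lemma ord_distinct3_gt2 i j k : i != j -> j != k -> i != k -> (2 < N)%N.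
Proof.
move=> nij njk nik; have := subset_leq_card (subsetT (i |: (j |: [set k]))).
by rewrite !cardsU1 cards1 !inE negb_or (negbTE nij) (negbTE nik) (negbTE njk) cardsT card_ord.
Qed.

Lemma dist_adj g i j : adj g i j -> dist g i j = 1%N.
Proof.
move=> a; have nij : i != j by case/andP: a.
have N1 := ord_neq_gt1 nij.
apply/eqP; rewrite eqn_leq dist_le ?has_walk1 //=.
by apply: dist_ge => [|[|//] _]; [exact: ltnW | rewrite has_walk0].
Qed.

Lemma dist_gt0 g i j : i != j -> (0 < dist g i j)%N.
Proof.
move=> nij; have N1 := ord_neq_gt1 nij.
by apply: dist_ge => [|[|//] _]; [exact: ltnW | rewrite has_walk0].
Qed.

Lemma dist_le2 g i k j : (2 < N)%N -> adj g i k -> adj g k j -> (dist g i j <= 2)%N.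
Proof.
move=> N2 a1 a2; apply: dist_le => //; apply/existsP; exists [tuple k; j].
by rewrite /= a1 a2 eqxx.
Qed.

Lemma dist_ge2 g i j : (2 < N)%N -> i != j -> ~~ adj g i j -> (2 <= dist g i j)%N.
Proof.
move=> N2 nij na; apply: dist_ge => [|[|[|//]] _]; first exact: ltnW.
  by rewrite has_walk0.
by rewrite has_walk1.
Qed.

End Network.

Definition edge N (p : 'I_N * 'I_N) : {set 'I_N} := [set p.1; p.2].
Arguments edge {N} p.

Definition edges N (ps : seq ('I_N * 'I_N)) : network N := [set e in map edge ps].

Definition connected_pairs N (g : network N) : knowledge N :=
  [set q | connect (adj g) q.1 q.2].

Fixpoint bridge_seq N (h : network N) (ps : seq ('I_N * 'I_N)) : bool :=
  if ps is p :: ps' then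
    [&& p.1 != p.2, ~~ connect (adj h) p.1 p.2 & bridge_seq (h :|: [set edge p]) ps']
  else true.

Definition knows_component N (K : knowledge N) (g : network N) (a : 'I_N) :=
  forall b, b != a -> connect (adj g) a b -> (a, b) \in K.

Definition sym_knowledge N (K : knowledge N) :=
  forall i j, (i, j) \in K -> (j, i) \in K.

(* For each agent [b], either [e] brings [b] as close to [a] in [h] as it is in
   [g], or [e] is useless for reaching [b] in [g]: then the marginal value of
   [e] to [a] is at least as large in [h] as in [g] (Lemma [agrees_dominated]). *)
Definition dominated N (g h : network N) (e : {set 'I_N}) (a : 'I_N) :=
  forall b, b != a ->
    (dist (h :|: [set e]) a b <= dist g a b)%N \/ (dist (g :\ e) a b <= dist g a b)%N.

Definition dominated_link N (g T : network N) (q : 'I_N * 'I_N) :=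
  [/\ q.1 != q.2, edge q \in g, edge q \notin T &
    forall h : network N, T \subset h -> h \subset g :\ edge q ->
      dominated g h (edge q) q.1 /\ dominated g h (edge q) q.2].

Section Bridges.
Variable N : nat.
Implicit Types (g h : network N) (p q : 'I_N * 'I_N) (ps : seq ('I_N * 'I_N)).

Lemma edgeC p : edge p = [set p.2; p.1].
Proof. exact: setUC. Qed.

Lemma edges_nil : edges [::] = set0 :> network N.
Proof. by apply/setP => e; rewrite !inE. Qed.

Lemma edges_cons p ps : edges (p :: ps) = edge p |: edges ps.
Proof. by apply/setP => e; rewrite !inE. Qed.

Lemma edge_inj_ltn p q : (p.1 < p.2)%N -> (q.1 < q.2)%N -> edge p = edge q -> p = q.
Proof.
case: p q => [a b] [x y] /= ab xy E.
have nab : a != b by rewrite neq_ltn ab.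
move: (eq_set2 E nab) => /= [[-> ->] // | [ay bx]].
by rewrite -ay -bx ltnNge ltnW in xy.
Qed.

Lemma wf_network_edges g : wf_network g ->
  exists ps, [/\ all (fun p => p.1 != p.2) ps, uniq (map edge ps) & edges ps = g].
Proof.
move=> /forall_inP wf.
suff [ps [np psE]] : exists ps,
    all (fun p => p.1 != p.2) ps /\ map edge ps = enum g :> seq {set 'I_N}.
  by exists ps; rewrite psE enum_uniq; split => //; apply/setP => e; rewrite inE psE mem_enum.
have : all (fun e : {set 'I_N} => #|e| == 2) (enum g) by apply/allP => e; rewrite mem_enum => /wf.
elim: (enum g) => [|e es IH] /=; first by exists [::].
case/andP=> /cards2P [x [y [nxy ->]]] /IH [ps [np psE]].
by exists ((x, y) :: ps); rewrite /= np psE nxy.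
Qed.

Lemma bridge_seq_valid h ps : bridge_seq h ps -> valid_path ps.
Proof. by elim: ps h => //= p ps IH h /and3P[np _ /IH]; rewrite /valid_path /= np. Qed.

Lemma fresh_bridge_seq h ps : all (fun p => p.1 != p.2) ps ->
  {in ps, forall p e, e \in h -> p.2 \notin e} ->
  pairwise (fun p q => q.2 \notin edge p) ps -> bridge_seq h ps.
Proof.
elim: ps h => //= p ps IH h /andP[np nps] iso /andP[fresh pw].
rewrite np /=; apply/andP; split.
  apply: contra np; rewrite connect_adj_sym => /connect_isolated -> //.
  by apply: iso; rewrite inE eqxx.
apply: IH => // q qps e; rewrite !inE => /orP[eh | /eqP ->].
  by apply: iso => //; rewrite inE qps orbT.
by move/allP: fresh; apply.
Qed.

Lemma tree_bridge_seq g h ps : is_tree g -> h \subset g ->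
  all (fun p => p.1 != p.2) ps -> uniq (map edge ps) ->
  {in ps, forall p, edge p \in g :\: h} -> bridge_seq h ps.
Proof.
case=> gconn gmin; elim: ps h => //= p ps IH h hg /andP[np nps] /andP[pps uq] inD.
have /setDP [pg ph] : edge p \in g :\: h by apply: inD; rewrite inE eqxx.
rewrite np /=; apply/andP; split.
  apply/negP => cn; apply: (gmin _ pg); apply: connected_setD1 => //.
  by apply: connect_adjS cn; rewrite subsetD1 hg.
apply: IH => //; first by rewrite subUset hg sub1set.
move=> q qps; have /setDP [qg qh] : edge q \in g :\: h by apply: inD; rewrite inE qps orbT.
rewrite !inE negb_or qh qg !andbT; apply: contraNN pps => /eqP <-.
exact: map_f.
Qed.

End Bridges.

Section Payoff.
Variables (R : realFieldType) (X : Type) (N : nat).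
Variables (f : X -> R) (kappa : 'I_N -> X) (Ef c delta : R).
Hypothesis f_gt0 : forall x, 0 < f x.
Hypothesis c_gt0 : 0 < c.
Hypothesis delta_gt0 : 0 < delta.
Hypothesis delta_lt1 : delta < 1.
Hypothesis c_le_Ef : c <= Ef.
Implicit Types (g h : network N) (a b : 'I_N) (p : 'I_N * 'I_N) (K : knowledge N).

Local Notation payoff := (exp_payoff f kappa Ef c delta).
Local Notation belief := (belief_val f kappa Ef).
Local Notation step := (step f kappa Ef c delta).
Local Notation run := (run f kappa Ef c delta).

Definition benefit K g a b :=
  if connect (adj g) a b then delta ^+ (dist g a b).-1 * belief K a b else 0.

Definition degree g a := #|[set j | adj g a j]|.

Definition agrees K g e a := payoff K (g :\ e) a <= payoff K (g :|: [set e]) a.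

Lemma exp_payoffE K g a :
  payoff K g a = \sum_(b | b != a) benefit K g a b - c *+ degree g a.
Proof. by rewrite /exp_payoff big_mkcondr. Qed.

Lemma belief_gt0 K a b : 0 < belief K a b.
Proof. by rewrite /belief_val; case: ifP => _; [exact: f_gt0 | exact: lt_le_trans c_le_Ef]. Qed.

Lemma benefit_ge0 K g a b : 0 <= benefit K g a b.
Proof. by rewrite /benefit; case: ifP => // _; rewrite mulr_ge0 ?exprn_ge0 ?ltW ?belief_gt0. Qed.

Lemma decay_le m n : (m <= n)%N -> delta ^+ n.-1 <= delta ^+ m.-1.
Proof. by move=> mn; rewrite ler_wiXn2l ?ltW // -!subn1 leq_sub2r. Qed.

Lemma benefitS K g1 g2 a b : g1 \subset g2 -> benefit K g1 a b <= benefit K g2 a b.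
Proof.
move=> S; rewrite /benefit; case: ifP => C1; last exact: benefit_ge0.
rewrite (connect_adjS S C1) ler_wpM2r ?decay_le ?distS //.
exact/ltW/belief_gt0.
Qed.

Lemma adj_setU1_setD1 g a b j : a != b ->
  adj (g :|: [set [set a; b]]) a j = (j == b) || adj (g :\ [set a; b]) a j.
Proof.
move=> nab; case: (eqVneq j b) => [-> | njb] /=; first exact: adj_setU1.
rewrite /adj !inE; case: (eqVneq a j) => //= naj.
suff -> : ([set a; j] == [set a; b]) = false by rewrite orbF.
apply/eqP => /eq_set2 /(_ naj) [[_ jb] | [ab _]].
  by rewrite jb eqxx in njb.
by rewrite ab eqxx in nab.
Qed.

Lemma degree_setU1 g a b : a != b ->
  degree (g :|: [set [set a; b]]) a = (degree (g :\ [set a; b]) a).+1.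
Proof.
move=> nab; rewrite /degree.
have -> : [set j | adj (g :|: [set [set a; b]]) a j] = b |: [set j | adj (g :\ [set a; b]) a j].
  by apply/setP => j; rewrite !inE adj_setU1_setD1.
by rewrite cardsU1 inE /adj nab !inE eqxx.
Qed.

Lemma link_gain K g a b : a != b ->
  payoff K (g :|: [set [set a; b]]) a - payoff K (g :\ [set a; b]) a =
  \sum_(j | j != a) (benefit K (g :|: [set [set a; b]]) a j - benefit K (g :\ [set a; b]) a j) - c.
Proof.
move=> nab; rewrite !exp_payoffE degree_setU1 // mulrSr sumrB.
set S1 := \sum_(j | _) _; set S2 := \sum_(j | _) _; set D := c *+ _; lra.
Qed.

Lemma agreesE K g a b : a != b ->
  agrees K g [set a; b] a =
  (c <= \sum_(j | j != a)
          (benefit K (g :|: [set [set a; b]]) a j - benefit K (g :\ [set a; b]) a j)).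
Proof. by move=> nab; rewrite /agrees -subr_ge0 link_gain // subr_ge0. Qed.

Lemma agrees_bridge K g a b : a != b -> ~~ connect (adj g) a b -> (a, b) \notin K ->
  agrees K g [set a; b] a.
Proof.
move=> nab nc nK; rewrite agreesE //.
set gw := g :|: _; set go := g :\ _.
have nba : b != a by rewrite eq_sym.
rewrite (bigD1 b nba) /=.
have -> : benefit K gw a b - benefit K go a b = Ef.
  rewrite /benefit connect1 ?adj_setU1 // dist_adj ?adj_setU1 //.
  rewrite ifN ?(contra (connect_adjS (subD1set g _))) //.
  by rewrite expr0 mul1r subr0 /belief_val (negbTE nK).
have : 0 <= \sum_(j | (j != a) && (j != b)) (benefit K gw a j - benefit K go a j).
  by apply: sumr_ge0 => j _; rewrite subr_ge0 benefitS // (subset_trans (subD1set _ _)) ?subsetUl.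
by move: c_le_Ef; lra.
Qed.

Lemma agrees_dominated g h a b : a != b -> [set a; b] \in g ->
  h \subset g :\ [set a; b] -> net_connected h -> dominated g h [set a; b] a ->
  agrees setT g [set a; b] a -> agrees setT h [set a; b] a.
Proof.
set e := [set a; b] => nab eg hg hconn dom; rewrite !agreesE // => /le_trans; apply.
have -> : g :|: [set e] = g by apply/setUidPl; rewrite sub1set.
have -> : h :\ e = h.
  apply/setDidPl; rewrite disjoint_sym disjoints1.
  by apply: contraTN isT => /(subsetP hg); rewrite setD11.
apply: ler_sum => j nja.
have hw : h \subset h :|: [set e] by apply: subsetUl.
have gog : g :\ e \subset g by apply: subD1set.
have hgw := subset_trans hg gog.
rewrite /benefit !(connect_adjS _ (hconn a j)) // -!mulrBl.
apply: ler_wpM2r; first exact/ltW/belief_gt0.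
rewrite -/e; case: (dom j nja) => /decay_le le_g.
  exact: lerB le_g (decay_le (distS a j hg)).
by apply: (@le_trans _ _ 0); rewrite ?subr_le0 ?subr_ge0 // decay_le ?distS.
Qed.

Definition next_network K h p :=
  if agrees K h (edge p) p.1 && agrees K h (edge p) p.2
  then h :|: [set edge p] else h :\ edge p.

Lemma stepE h K p : step (h, K) p = (next_network K h p, update_know (next_network K h p) K).
Proof. by []. Qed.

Lemma step_bridge h K p : p.1 != p.2 -> ~~ connect (adj h) p.1 p.2 ->
  (p.1, p.2) \notin K -> (p.2, p.1) \notin K ->
  step (h, K) p = (h :|: [set edge p], update_know (h :|: [set edge p]) K).
Proof.
move=> np nc nK1 nK2.
have a1 : agrees K h (edge p) p.1 by apply: agrees_bridge.
have a2 : agrees K h (edge p) p.2.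
  by rewrite edgeC; apply: agrees_bridge; rewrite 1?eq_sym 1?connect_adj_sym.
by rewrite stepE /next_network a1 a2.
Qed.

Lemma knows_componentS K g1 g2 a : g1 \subset g2 ->
  knows_component K g2 a -> knows_component K g1 a.
Proof. by move=> S kn b nba /(connect_adjS S); apply: kn. Qed.

Lemma exp_payoff_known K g a : knows_component K g a -> payoff K g a = payoff setT g a.
Proof.
move=> kn; rewrite /exp_payoff; congr (_ - _); apply: eq_bigr => b /andP[nb cb].
by rewrite /belief_val kn // inE.
Qed.

Lemma agrees_known K h e a : knows_component K (h :|: [set e]) a ->
  agrees K h e a = agrees setT h e a.
Proof.
move=> kn; have hw : h :\ e \subset h :|: [set e].
  exact: subset_trans (subD1set _ _) (subsetUl _ _).
by rewrite /agrees !(exp_payoff_known kn) (exp_payoff_known (knows_componentS hw kn)).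
Qed.

Lemma next_network_known h K p :
  knows_component K (h :|: [set edge p]) p.1 -> knows_component K (h :|: [set edge p]) p.2 ->
  next_network K h p = next_network setT h p.
Proof. by move=> kn1 kn2; rewrite /next_network !agrees_known. Qed.

Lemma next_network_eq K h1 h2 p :
  h1 :|: [set edge p] = h2 :|: [set edge p] -> h1 :\ edge p = h2 :\ edge p ->
  next_network K h1 p = next_network K h2 p.
Proof. by move=> E1 E2; rewrite /next_network /agrees E1 E2. Qed.

Lemma next_network_stable_CI g p : stable_CI f kappa Ef c delta g -> p.1 != p.2 ->
  next_network setT g p = g.
Proof. by move=> st np; apply: (st [:: p]); rewrite /valid_path /= np. Qed.

Lemma stable_CI_agrees g p : stable_CI f kappa Ef c delta g -> p.1 != p.2 ->
  edge p \in g -> agrees setT g (edge p) p.1 && agrees setT g (edge p) p.2.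
Proof.
move=> st np eg; move: (next_network_stable_CI st np); rewrite /next_network.
by case: ifP => // _ gE; move: eg; rewrite -{1}gE setD11.
Qed.

Lemma step_dominated g h p : stable_CI f kappa Ef c delta g -> p.1 != p.2 ->
  edge p \in g -> h \subset g :\ edge p -> net_connected h ->
  dominated g h (edge p) p.1 -> dominated g h (edge p) p.2 ->
  step (h, setT) p = (h :|: [set edge p], setT).
Proof.
move=> st np eg hg hconn dom1 dom2.
have /andP[a1 a2] := stable_CI_agrees st np eg.
have a1' : agrees setT h (edge p) p.1 by exact: agrees_dominated np eg hg hconn dom1 a1.
have a2' : agrees setT h (edge p) p.2.
  move: np eg hg dom2 a2; rewrite eq_sym edgeC => np' eg' hg' dom2' a2'.
  exact: agrees_dominated np' eg' hg' hconn dom2' a2'.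
by rewrite stepE /next_network a1' a2' /update_know setTU.
Qed.

Lemma connected_pairsS g1 g2 : g1 \subset g2 -> connected_pairs g1 \subset connected_pairs g2.
Proof. by move=> S; apply/subsetP => q; rewrite !inE; apply: connect_adjS. Qed.

Lemma connected_pairsT g : net_connected g -> connected_pairs g = setT.
Proof. by move=> C; apply/setP => q; rewrite !inE C. Qed.

Lemma run_cat st s1 s2 : run st (s1 ++ s2) = run (run st s1) s2.
Proof. exact: foldl_cat. Qed.

Lemma connected_pairs_run st s : s != [::] ->
  connected_pairs (run st s).1 \subset (run st s).2.
Proof.
case/lastP: s => // s p _; rewrite /Defs.run foldl_rcons.
by case: foldl => h K; rewrite stepE; apply: subsetUr.
Qed.

Lemma knowledge_run_mono (st : network N * knowledge N) s : st.2 \subset (run st s).2.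
Proof.
elim: s st => // p s IH [h K]; apply: subset_trans (IH _).
by rewrite stepE; apply: subsetUl.
Qed.

Lemma step_bridge_connected h K p : K \subset connected_pairs h ->
  p.1 != p.2 -> ~~ connect (adj h) p.1 p.2 ->
  step (h, K) p = (h :|: [set edge p], connected_pairs (h :|: [set edge p])).
Proof.
move=> KS np nc; have notK q : q \in K -> ~~ connect (adj h) q.1 q.2 -> False.
  by move=> /(subsetP KS); rewrite inE => ->.
rewrite step_bridge //; last by apply/negP => /notK; rewrite connect_adj_sym; apply.
- congr (_, _); apply/setUidPr/(subset_trans KS)/connected_pairsS/subsetUl.
- by apply/negP => /notK; apply.
Qed.

Lemma run_bridge_seq h K p ps : K \subset connected_pairs h -> bridge_seq h (p :: ps) ->
  run (h, K) (p :: ps) = (h :|: edges (p :: ps), connected_pairs (h :|: edges (p :: ps))).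
Proof.
elim: ps h K p => [|q ps IH] h K p KS /and3P[np nc ok].
  by rewrite /Defs.run /= step_bridge_connected // edges_cons edges_nil setU0.
have -> : run (h, K) (p :: q :: ps) = run (step (h, K) p) (q :: ps) by [].
by rewrite step_bridge_connected // IH // [edges (p :: _)]edges_cons setUA.
Qed.

Lemma run_dominated g T qs h : stable_CI f kappa Ef c delta g -> net_connected T ->
  T \subset h -> h \subset g -> uniq (map edge qs) ->
  {in qs, forall q, edge q \notin h /\ dominated_link g T q} ->
  run (h, setT) qs = (h :|: edges qs, setT).
Proof.
move=> st Tconn; elim: qs h => [|p qs IH] h Th hg; first by rewrite edges_nil setU0.
rewrite map_cons cons_uniq => /andP[pqs uq] dom.
have [ph [np pg _ domT]] := dom p (mem_head _ _).
have hD : h \subset g :\ edge p by rewrite subsetD1 hg.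
have hconn : net_connected h by move=> u v; apply: connect_adjS Th (Tconn u v).
have [dom1 dom2] := domT h Th hD.
have -> : run (h, setT) (p :: qs) = run (step (h, setT) p) qs by [].
rewrite (step_dominated st) // IH ?edges_cons ?setUA //.
- exact: subset_trans Th (subsetUl _ _).
- by rewrite subUset hg sub1set.
- move=> q qin; have [qh domq] : edge q \notin h /\ dominated_link g T q.
    by apply: dom; rewrite inE qin orbT.
  split => //.
  rewrite in_setU in_set1 negb_or qh /=.
  by apply: contraNN pqs => /eqP <-; apply: map_f.
Qed.

Lemma in_GIC_spanning g ps qs : (1 < N)%N -> stable_CI f kappa Ef c delta g ->
  bridge_seq set0 ps -> net_connected (edges ps) -> uniq (map edge qs) ->
  {in qs, forall q, dominated_link g (edges ps) q} -> edges ps :|: edges qs = g ->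
  in_GIC f kappa Ef c delta g.
Proof.
move=> N1 st bps Tconn uq dom gE.
case: ps bps Tconn dom gE => [|p ps] bps Tconn dom gE.
  suff /(congr1 val) : Ordinal (ltnW N1) = Ordinal N1 by [].
  apply: (connect_isolated (g := set0)) => [e|]; first by rewrite inE.
  by rewrite -edges_nil.
have runE : run (set0, set0) ((p :: ps) ++ qs) = (g, setT).
  rewrite run_cat run_bridge_seq ?sub0set // set0U connected_pairsT //.
  have Tg : edges (p :: ps) \subset g by rewrite -gE subsetUl.
  rewrite (run_dominated st Tconn) ?gE // => q qin.
  by split; last exact: dom; case: (dom q qin).
exists ((p :: ps) ++ qs); rewrite runE; split => //.
rewrite /valid_path all_cat; apply/andP; split; first exact: bridge_seq_valid bps.
by apply/allP => q /dom [].
Qed.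

Lemma tree_in_GIC g : (1 < N)%N -> wf_network g -> is_tree g ->
  stable_CI f kappa Ef c delta g -> in_GIC f kappa Ef c delta g.
Proof.
move=> N1 wf tree st; have [ps [np uq psE]] := wf_network_edges wf.
apply: (@in_GIC_spanning g ps [::]) => //; last by rewrite edges_nil setU0.
- by apply: (tree_bridge_seq tree); rewrite ?sub0set // => p pps; rewrite setD0 -psE inE map_f.
- by rewrite psE; case: tree.
Qed.

Lemma update_knowE g K q : (q \in update_know g K) = (q \in K) || connect (adj g) q.1 q.2.
Proof. by rewrite in_setU in_set. Qed.

Lemma sym_knowledge_update g K : sym_knowledge K -> sym_knowledge (update_know g K).
Proof.
move=> sK i j; rewrite !update_knowE /= => /orP[/sK -> // | ij].
by rewrite connect_adj_sym ij orbT.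
Qed.

Lemma knows_edge K a b : (a, b) \in K -> knows_component K [set [set a; b]] a.
Proof.
move=> ab j nja /connect_set1 [E | [_]]; first by rewrite E eqxx in nja.
by case/set2P => [E | ->] //; rewrite E eqxx in nja.
Qed.

Section EmptyNetwork.
Hypothesis st0 : stable_CI f kappa Ef c delta set0.

Lemma step_known_edge h K p : p.1 != p.2 -> h \subset [set edge p] ->
  sym_knowledge K -> (p.1, p.2) \in K -> step (h, K) p = (set0, update_know set0 K).
Proof.
move=> np he sK pK; have hE : h :|: [set edge p] = [set edge p] by apply/setUidPr.
have kn1 : knows_component K (h :|: [set edge p]) p.1 by rewrite hE; apply: knows_edge.
have kn2 : knows_component K (h :|: [set edge p]) p.2.
  by rewrite hE edgeC; apply/knows_edge/sK.
have hD : h :\ edge p = set0 by apply/eqP; rewrite setD_eq0.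
suff E : next_network K h p = set0 by rewrite stepE E.
rewrite (next_network_known kn1 kn2) -[RHS](next_network_stable_CI st0 np).
apply: next_network_eq; first by rewrite hE set0U.
by rewrite hD; apply/setP => e; rewrite !inE andbF.
Qed.

Lemma run_toggle K p : p.1 != p.2 -> sym_knowledge K ->
  exists2 K', run (set0, K) [:: p; p] = (set0, K') &
    sym_knowledge K' /\ (p.1, p.2) \in K'.
Proof.
move=> np sK.
have [h1 [K1 [E1 h1e sK1 pK1]]] : exists h1 K1, [/\ step (set0, K) p = (h1, K1),
    h1 \subset [set edge p], sym_knowledge K1 & (p.1, p.2) \in K1].
  case: (boolP ((p.1, p.2) \in K)) => pK.
    exists set0, (update_know set0 K).
    split; [exact: step_known_edge np (sub0set _) sK pK | exact: sub0set |
            exact: sym_knowledge_update | by rewrite update_knowE pK].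
  have nc : ~~ connect (adj set0) p.1 p.2.
    by apply: contra np => /connect_isolated -> // e; rewrite inE.
  exists [set edge p], (update_know [set edge p] K).
  have nK : (p.2, p.1) \notin K by apply: contra pK => /sK.
  split; [by rewrite step_bridge // set0U | exact: subxx | exact: sym_knowledge_update |].
  by rewrite update_knowE connect1 ?orbT // /adj np set11.
exists (update_know set0 K1).
  have -> : run (set0, K) [:: p; p] = step (step (set0, K) p) p by [].
  by rewrite E1 (step_known_edge np h1e sK1 pK1).
by split; [exact: sym_knowledge_update | rewrite update_knowE pK1].
Qed.

Lemma run_toggles K ps : sym_knowledge K -> all (fun p => p.1 != p.2) ps ->
  exists2 K', run (set0, K) (flatten [seq [:: p; p] | p <- ps]) = (set0, K') &
    {in ps, forall p, (p.1, p.2) \in K'}.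
Proof.
elim: ps K => [|p ps IH] K sK; first by exists K.
case/andP=> np nps; have [K1 E1 [sK1 pK1]] := run_toggle np sK.
have [K' E' known] := IH K1 sK1 nps.
exists K'; first by rewrite -cat1s map_cat flatten_cat run_cat E1.
move=> q; rewrite inE => /orP[/eqP -> | /known //].
have := knowledge_run_mono (set0, K1) (flatten [seq [:: q; q] | q <- ps]).
by rewrite E' => /subsetP; apply.
Qed.

Lemma empty_in_GIC : (1 < N)%N -> in_GIC f kappa Ef c delta set0.
Proof.
move=> N1; set ps := [seq p <- enum {: 'I_N * 'I_N} | p.1 != p.2].
set s := flatten [seq [:: p; p] | p <- ps].
have nps : all (fun p => p.1 != p.2) ps by apply/allP => p; rewrite mem_filter => /andP[].
have sym0 : sym_knowledge (set0 : knowledge N) by move=> i j; rewrite inE.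
have [K' runE known] := run_toggles sym0 nps.
have s_nil : s != [::].
  have : (Ordinal (ltnW N1), Ordinal N1) \in ps by rewrite mem_filter mem_enum.
  by rewrite /s; case: (ps).
have KT : K' = setT.
  apply/setP => -[i j]; rewrite inE; case: (eqVneq i j) => [<- | nij].
    by move: (connected_pairs_run (set0, set0) s_nil); rewrite runE => /subsetP; apply; rewrite inE.
  by apply: (known (i, j)); rewrite mem_filter mem_enum inE andbT.
exists s; rewrite runE KT; split => //.
apply/allP => q /flatten_mapP [p pps]; rewrite !inE => /orP[] /eqP ->.
  by move/allP: nps; apply.
by move/allP: nps; apply.
Qed.

End EmptyNetwork.

Section CorePeriphery.
Variables (g : network N) (I' : {set 'I_N}) (c0 : 'I_N) (nb : 'I_N -> 'I_N).
Hypothesis wf : wf_network g.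
Hypothesis c0_core : c0 \in I'.
Hypothesis core_adj : forall i j, i \in I' -> j \in I' -> i != j -> adj g i j.
Hypothesis nb_core : forall j, j \notin I' -> nb j \in I'.
Hypothesis nb_adj : forall j, j \notin I' -> adj g j (nb j).
Hypothesis nb_unique : forall j k, j \notin I' -> k \in I' -> adj g j k -> k = nb j.
Hypothesis periphery_nadj : forall j k, j \notin I' -> k \notin I' -> ~~ adj g j k.

Definition cp_tree :=
  [seq (c0, k) | k <- enum (I' :\ c0)] ++ [seq (nb j, j) | j <- enum (~: I')].

Definition core_pairs := [seq q <- enum {: 'I_N * 'I_N} |
  [&& q.1 \in I', q.2 \in I', (q.1 < q.2)%N, q.1 != c0 & q.2 != c0]].

Lemma nb_neq j : j \notin I' -> nb j != j.
Proof. by move=> jI; apply/eqP => E; move: (nb_core jI); rewrite E (negbTE jI). Qed.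

Lemma mem_cp_tree p : (p \in cp_tree) =
  (p.1 == c0) && (p.2 \in I' :\ c0) || (p.2 \notin I') && (p.1 == nb p.2).
Proof.
case: p => x y; rewrite mem_cat; congr (_ || _); apply/mapP/andP => /=.
- by case=> k; rewrite mem_enum => kI [-> ->].
- by case=> /eqP -> yI; exists y; rewrite ?mem_enum.
- by case=> j; rewrite mem_enum inE => jI [-> ->].
- by case=> yI /eqP ->; exists y; rewrite ?mem_enum ?inE.
Qed.

Lemma star_edge k : k \in I' -> k != c0 -> [set c0; k] \in edges cp_tree.
Proof.
move=> kI kc; rewrite inE (map_f edge (_ : (c0, k) \in _)) //.
by rewrite mem_cp_tree /= eqxx !inE kc kI.
Qed.

Lemma periphery_edge j : j \notin I' -> [set nb j; j] \in edges cp_tree.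
Proof.
move=> jI; rewrite inE (map_f edge (_ : (nb j, j) \in _)) //.
by rewrite mem_cp_tree /= jI eqxx orbT.
Qed.

Lemma cp_tree_connected : net_connected (edges cp_tree).
Proof.
have core_c0 k : k \in I' -> connect (adj (edges cp_tree)) c0 k.
  move=> kI; case: (eqVneq k c0) => [-> // | kc].
  by apply: connect1; rewrite /adj eq_sym kc star_edge.
have all_c0 k : connect (adj (edges cp_tree)) c0 k.
  case: (boolP (k \in I')) => [/core_c0 // | kI].
  apply: connect_trans (core_c0 _ (nb_core kI)) (connect1 _).
  by rewrite /adj nb_neq ?periphery_edge.
by move=> u v; apply: connect_trans (all_c0 v); rewrite connect_adj_sym.
Qed.

Lemma cp_tree_bridge : bridge_seq set0 cp_tree.
Proof.
have np : all (fun p => p.1 != p.2) cp_tree.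
  apply/allP => p; rewrite mem_cp_tree => /orP[/andP[/eqP -> ] | /andP[pI /eqP ->]].
    by rewrite !inE eq_sym => /andP[].
  exact: nb_neq.
apply: (fresh_bridge_seq np) => [p _ e | ]; first by rewrite inE.
rewrite pairwise_cat !pairwise_map; apply/and3P; split.
- apply/allrelP => _ _ /mapP[k kI ->] /mapP[j jI ->] /=.
  move: kI jI; rewrite !mem_enum !inE negb_or => /andP[_ kI] jI.
  by apply/andP; split; apply: contraNneq jI => ->.
- have := enum_uniq (I' :\ c0); rewrite uniq_pairwise.
  apply: (sub_in_pairwise _ (allss _)) => k k'.
  rewrite !mem_enum !inE /= => /andP[_ _] /andP[k'c _] kk'.
  by rewrite !inE negb_or k'c eq_sym.
- have := enum_uniq (~: I'); rewrite uniq_pairwise.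
  apply: (sub_in_pairwise _ (allss _)) => j j'.
  rewrite !mem_enum !inE /= => jI j'I jj'.
  rewrite !inE negb_or (eq_sym j' j) jj' andbT.
  by apply: contraNneq j'I => ->; apply: nb_core.
Qed.

Lemma core_link_dominated h a b : a \in I' -> b \in I' -> a != b -> a != c0 -> b != c0 ->
  edges cp_tree \subset h -> dominated g h [set a; b] a.
Proof.
move=> aI bI nab nac nbc treeh j nja; set e := [set a; b].
have N2 : (2 < N)%N := ord_distinct3_gt2 nab nbc nac.
case: (eqVneq j b) => [-> | njb].
  by left; rewrite dist_adj ?adj_setU1 ?dist_gt0.
have je : j \notin e by rewrite !inE negb_or nja njb.
have adj_gD u : adj g j u -> adj (g :\ e) u j by move=> ju; rewrite adj_sym adj_setD1_notin.
case: (boolP (j \in I')) => jI.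
  by right; rewrite dist_adj ?dist_gt0 1?eq_sym // adj_gD // core_adj.
have far : nb j != a -> (2 <= dist g a j)%N.
  move=> nja'; apply: dist_ge2; rewrite 1?eq_sym //.
  by apply: contra nja'; rewrite adj_sym => /(nb_unique jI aI) ->.
case: (eqVneq (nb j) a) => [ja | nja'].
  by right; rewrite dist_adj ?dist_gt0 1?eq_sym // -ja adj_gD ?nb_adj.
case: (eqVneq (nb j) b) => [jb | njb'].
  left; apply: leq_trans (far nja'); apply: (dist_le2 _ (adj_setU1 _ nab)) => //.
  by rewrite /adj -jb nb_neq // !inE (subsetP treeh) ?periphery_edge.
right; apply: leq_trans (far nja'); apply: (dist_le2 N2 (k := nb j)); last exact/adj_gD/nb_adj.
by rewrite adj_sym adj_setD1_notin ?core_adj ?nb_core // !inE negb_or nja' njb'.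
Qed.

Lemma mem_core_pairs q : (q \in core_pairs) =
  [&& q.1 \in I', q.2 \in I', (q.1 < q.2)%N, q.1 != c0 & q.2 != c0].
Proof. by rewrite mem_filter mem_enum inE andbT. Qed.

Lemma core_pairs_uniq : uniq (map edge core_pairs).
Proof.
rewrite map_inj_in_uniq; first exact/filter_uniq/enum_uniq.
move=> p q.
by rewrite !mem_core_pairs => /and5P[_ _ ltp _ _] /and5P[_ _ ltq _ _]; apply: edge_inj_ltn.
Qed.

Lemma core_pair_dominated q : q \in core_pairs -> dominated_link g (edges cp_tree) q.
Proof.
rewrite mem_core_pairs => /and5P[q1I q2I lt q1c q2c].
have nq : q.1 != q.2 by rewrite neq_ltn lt.
have edge_core x : x \in edge q -> (x \in I') && (x != c0).
  by rewrite !inE => /orP[] /eqP ->; apply/andP.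
split => //; first by case/andP: (core_adj q1I q2I nq).
  apply/negP; rewrite inE => /mapP[p]; rewrite mem_cp_tree.
  case/orP=> [/andP[/eqP p1 _] | /andP[p2I _]] E.
    by have := edge_core p.1; rewrite E /edge set21 p1 eqxx andbF => /(_ isT).
  by have := edge_core p.2; rewrite E /edge set22 (negbTE p2I) => /(_ isT).
move=> h treeh _; split; first exact: core_link_dominated q1I q2I nq q1c q2c treeh.
by rewrite edgeC; apply: core_link_dominated q2I q1I _ q2c q1c treeh; rewrite eq_sym.
Qed.

Lemma cp_edges : edges cp_tree :|: edges core_pairs = g.
Proof.
have adj_in i j : adj g i j -> [set i; j] \in g by case/andP.
apply/eqP; rewrite eqEsubset subUset -andbA; apply/and3P; split.
- apply/subsetP => x; rewrite inE => /mapP[p].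
  rewrite mem_cp_tree => /orP[/andP[/eqP p1 pI] | /andP[pI /eqP p1]] ->.
    by move: pI; rewrite /edge p1 !inE => /andP[pc pI]; apply/adj_in/core_adj; rewrite 1?eq_sym.
  by rewrite /edge p1 setUC; apply/adj_in/nb_adj.
- apply/subsetP => x; rewrite inE => /mapP[q]; rewrite mem_core_pairs => /and5P[q1I q2I lt _ _] ->.
  by apply/adj_in/core_adj; rewrite // neq_ltn lt.
apply/subsetP => e eg; have /cards2P [u [v [nuv eE]]] := forall_inP wf e eg.
have uv : adj g u v by rewrite /adj nuv -eE.
rewrite eE in_setU; apply/orP.
case: (boolP (u \in I')) => uI; case: (boolP (v \in I')) => vI.
- case: (eqVneq u c0) => [uc | nuc]; first by left; rewrite uc star_edge // -uc eq_sym.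
  case: (eqVneq v c0) => [vc | nvc]; first by left; rewrite setUC vc star_edge // -vc.
  right; rewrite inE; case: (ltngtP u v) => [uv' | vu' | /val_inj uv'].
  - by apply: (map_f edge (_ : (u, v) \in _)); rewrite mem_core_pairs /= uI vI uv' nuc nvc.
  - rewrite setUC; apply: (map_f edge (_ : (v, u) \in _)).
    by rewrite mem_core_pairs /= uI vI vu' nuc nvc.
  - by rewrite uv' eqxx in nuv.
- by left; rewrite (nb_unique vI uI) 1?adj_sym // periphery_edge.
- by left; rewrite setUC (nb_unique uI vI uv) periphery_edge.
- by move: (periphery_nadj uI vI); rewrite uv.
Qed.

Lemma cp_in_GIC : (1 < N)%N -> stable_CI f kappa Ef c delta g -> in_GIC f kappa Ef c delta g.
Proof.
move=> N1 st; apply: (in_GIC_spanning N1 st cp_tree_bridge cp_tree_connected core_pairs_uniq).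
  exact: core_pair_dominated.
exact: cp_edges.
Qed.

End CorePeriphery.

Section Wheel.
Variable sg : {perm 'I_N}.
Hypothesis N1 : (1 < N)%N.

Lemma predN_ltN : (N.-1 < N)%N.
Proof. by rewrite ltn_predL ltnW. Qed.

Definition last_ord : 'I_N := Ordinal predN_ltN.

Definition wheel_path := [seq (sg k, sg (ordS k)) | k <- enum 'I_N & k != last_ord].

Definition closing_pair := (sg last_ord, sg (ordS last_ord)).

Lemma succ_ltN (k : 'I_N) : k != last_ord -> (k.+1 < N)%N.
Proof.
move=> kl; have kN := ltn_ord k; rewrite -ltn_predRL ltn_neqAle -ltnS (ltn_predK kN) kN andbT.
by rewrite -(inj_eq val_inj) in kl.
Qed.

Lemma val_ordS_lt (k : 'I_N) : k != last_ord -> val (ordS k) = k.+1.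
Proof. by move/succ_ltN => kN; rewrite /= modn_small. Qed.

Lemma wheel_edges : [set [set sg k; sg (ordS k)] | k : 'I_N] =
  edges wheel_path :|: [set edge closing_pair].
Proof.
apply/setP => x; rewrite in_setU in_set1 inE; apply/imsetP/orP.
  case=> k _ ->; case: (eqVneq k last_ord) => [-> | kl]; first by right.
  left; apply: (map_f edge (_ : (sg k, sg (ordS k)) \in wheel_path)).
  by rewrite map_f // mem_filter kl mem_enum.
case=> [/mapP[_ /mapP[k kin ->] ->] | /eqP ->]; first by exists k.
by exists last_ord.
Qed.

Lemma wheel_path_bridge : bridge_seq set0 wheel_path.
Proof.
set ks := [seq k <- enum 'I_N | k != last_ord].
have ks_lt : pairwise (fun j k : 'I_N => (j < k)%N) ks.
  apply: pairwise_filter; have := iota_ltn_sorted 0 N.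
  by rewrite -val_enum_ord sorted_pairwise ?pairwise_map //; apply: ltn_trans.
have ks_succ k : k \in ks -> val (ordS k) = k.+1.
  by rewrite mem_filter => /andP[/val_ordS_lt].
have np : all (fun p => p.1 != p.2) wheel_path.
  apply/allP => _ /mapP[k /ks_succ kS ->] /=; rewrite (inj_eq perm_inj).
  by rewrite -(inj_eq val_inj) kS neq_ltn ltnSn.
apply: (fresh_bridge_seq np) => [p _ e | ]; first by rewrite inE.
rewrite pairwise_map; apply: (sub_in_pairwise _ (allss _) ks_lt) => j k jin kin jk /=.
rewrite !inE !(inj_eq perm_inj) !(inj_eq (@ordS_inj N)) negb_or -!(inj_eq val_inj) ks_succ //.
by rewrite !neq_ltn ltnS (ltnW jk) jk !orbT.
Qed.

Lemma wheel_path_connected : net_connected (edges wheel_path).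
Proof.
set i0 : 'I_N := Ordinal (ltnW N1).
have reach (i : 'I_N) : connect (adj (edges wheel_path)) (sg i0) (sg i).
  case: i => n; elim: n => [|n IH] nN; first by rewrite (_ : Ordinal nN = i0) //; apply: val_inj.
  set k : 'I_N := Ordinal (ltnW nN).
  have kl : k != last_ord by rewrite -(inj_eq val_inj) /= neq_ltn -ltnS prednK ?nN // ltnW.
  have -> : Ordinal nN = ordS k by apply: val_inj; rewrite val_ordS_lt.
  apply: connect_trans (IH (ltnW nN)) (connect1 _).
  rewrite /adj (inj_eq perm_inj) -(inj_eq val_inj) val_ordS_lt // neq_ltn ltnSn /=.
  rewrite inE (map_f edge (_ : (sg k, sg (ordS k)) \in wheel_path)) //.
  by rewrite map_f // mem_filter kl mem_enum.
move=> u v; rewrite -(permKV sg u) -(permKV sg v).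
by apply: connect_trans (reach _); rewrite connect_adj_sym.
Qed.

Lemma closing_pair_neq : closing_pair.1 != closing_pair.2.
Proof.
rewrite (inj_eq perm_inj) -(inj_eq val_inj) /= (ltn_predK N1) modnn.
by rewrite -lt0n ltn_predRL.
Qed.

Lemma wheel_in_GIC g : stable_CI f kappa Ef c delta g ->
  g = [set [set sg k; sg (ordS k)] | k : 'I_N] -> in_GIC f kappa Ef c delta g.
Proof.
rewrite wheel_edges => st gE.
have in_spanning := in_GIC_spanning N1 st wheel_path_bridge wheel_path_connected.
case: (boolP (edge closing_pair \in edges wheel_path)) => inpath.
  apply: (in_spanning [::]) => [// | // |].
  by rewrite gE edges_nil setU0; apply/esym/setUidPl; rewrite sub1set.
apply: (in_spanning [:: closing_pair]).
- by rewrite map_cons cons_uniq in_nil.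
- move=> q; rewrite inE => /eqP -> {q}.
  split; [exact: closing_pair_neq | by rewrite gE in_setU set11 orbT | exact: inpath |].
  move=> h Th _; split=> b _; left; apply: distS; rewrite gE; exact: setUSS Th (subxx _).
- by rewrite gE edges_cons edges_nil setU0.
Qed.

End Wheel.

Lemma core_periphery_in_GIC g : (1 < N)%N -> wf_network g ->
  stable_CI f kappa Ef c delta g -> is_core_periphery g -> in_GIC f kappa Ef c delta g.
Proof.
move=> N1 wf st [I' [/set0Pn [c0 c0I] _ core per]].
pose nb j := odflt c0 [pick k in I' | adj g j k].
have nbP j : j \notin I' ->
    [/\ nb j \in I', adj g j (nb j) & forall k, k \in I' -> adj g j k -> k = nb j].
  move=> jI; have [/eqP /cards1P [x Sx] _] := per j jI.
  have uniq_x k : k \in I' -> adj g j k -> k = x.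
    by move=> kI jk; apply/set1P; rewrite -Sx inE kI jk.
  have /setIdP [xI jx] : x \in [set k in I' | adj g j k] by rewrite Sx set11.
  rewrite /nb; case: pickP => [k /andP[kI jk] | /(_ x)]; last by rewrite xI jx.
  by rewrite /= (uniq_x k kI jk); split => // k' k'I /(uniq_x k' k'I).
apply: (cp_in_GIC (nb := nb) wf c0I core) => //.
- by move=> j /nbP [].
- by move=> j /nbP [].
- by move=> j k /nbP [_ _ nb_uniq]; apply: nb_uniq.
- by move=> j k /per [_ nadj]; apply: nadj.
Qed.

(* [cp_in_GIC] allows the core to be everybody, unlike [is_core_periphery]. *)
Lemma complete_in_GIC g : (1 < N)%N -> wf_network g ->
  stable_CI f kappa Ef c delta g -> is_complete g -> in_GIC f kappa Ef c delta g.
Proof.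
move=> N1 wf st complete.
apply: (cp_in_GIC (I' := setT) (c0 := Ordinal (ltnW N1)) (nb := id) wf) => //.
all: first [exact: in_setT | by move=> i j _ _; apply: complete | by move=> j; rewrite in_setT].
Qed.

End Payoff.

Theorem theorem2 (R : realFieldType) (X : Type) (N : nat)
    (f : X -> R) (c delta Ef : R) (kappa : 'I_N -> X) (g : network N) :
  (2 <= N)%N ->
  (forall x, 0 < f x) -> 0 < c -> 0 < delta -> delta < 1 ->
  c <= Ef ->
  wf_network g ->
  stable_CI f kappa Ef c delta g ->
  is_empty_net g \/ is_tree g \/ is_complete g \/ is_core_periphery g
    \/ is_wheel g ->
  in_GIC f kappa Ef c delta g.
Proof.
move=> N1 f_gt0 c_gt0 delta_gt0 delta_lt1 c_le_Ef wf st.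
case=> [g0 | [tree | [complete | [cp | [sg gE]]]]].
- by rewrite /is_empty_net in g0; subst g; exact: empty_in_GIC.
- exact: tree_in_GIC.
- exact: complete_in_GIC.
- exact: core_periphery_in_GIC.
- exact: wheel_in_GIC gE.
Qed.
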